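(* Let $a_1,\dots,a_n\in S^d$. Algorithm 2.6 (described in the context) terminates after finitely many steps, for feasible as well as infeasible instances. It terminates either in step 2 with a point $x^k/\|x^k\|\in S^d$ satisfying $a_i^Tx^k\ge0$ for all $i$, or in step 3 with a positively spanning subset of $\{a_1,\dots,a_n\}$. In this sense it solves the spherical feasibility problem: find $x\in S^d$ with $a_i^Tx\ge0$ for all $i$, or show none exists.
   Context: $S^d$ is the unit sphere in $\mathbb{R}^{d+1}$ and $O$ is the origin. For $x\in S^d$, an index $m$ is a most violated constraint if $a_m^Tx=\min_j a_j^Tx$. A finite set $Q$ is positively spanning if it is affinely independent and $O\in\mathrm{conv}\,Q$. The touching sphere of an affinely independent $Q$ is the unique sphere $\{z:\|z-C\|=R\}$ with $C\in\mathrm{aff}\,Q$ containing $Q$. Algorithm 2.6: (1) Choose any $j$ and set $k=1$, $x^1=a_j$, $Q_1=\{a_j\}$. (2) If $x^k/\|x^k\|$ is feasible, stop. Otherwise let $m$ be the index of a most violated constraint for $x^k/\|x^k\|$, and set $y=x^k$. (3) If $Q_k\cup\{a_m\}$ is positively spanning, stop. (4) Compute the center $C$ of the touching sphere of $Q_k\cup\{a_m\}$. (5) If $C\in\mathrm{conv}(Q_k\cup\{a_m\})$, set $x^{k+1}=C$, $Q_{k+1}=Q_k\cup\{a_m\}$ and $k:=k+1$, then go to (2). (6) Otherwise, let $y$ be the point where the segment $\overline{yC}$ meets the relative boundary of $\mathrm{conv}(Q_k\cup\{a_m\})$. Let $F$ be a facet of $\mathrm{conv}(Q_k\cup\{a_m\})$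 containing $y$, and let $a_j$ be the vertex of $Q_k$ not contained in $F$. Set $Q_k:=Q_k\setminus\{a_j\}$ and go to (4). *)

(* Vectors of R^{d+1} are row vectors 'rV[R]_d.+1 over a
   real closed field R (so that square roots / norms exist). *)
From HB Require Import structures.
From mathcomp Require Import all_boot all_order all_algebra.
Set Implicit Arguments. Unset Strict Implicit. Unset Printing Implicit Defensive.
Import Order.TTheory GRing.Theory Num.Theory.
Local Open Scope ring_scope.

Section Defs.
Variables (R : rcfType) (d n : nat).
Local Notation vec := 'rV[R]_d.+1.

Definition dot (u v : vec) : R := \sum_(i < d.+1) u 0 i * v 0 i.
Definition vnorm (u : vec) : R := Num.sqrt (dot u u).

Variable a : 'I_n -> vec.

Definition feasible (x : vec) : Prop := forall i, 0 <= dot (a i) x.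

Definition most_violated (x : vec) (m : 'I_n) : Prop :=
  forall j, dot (a m) x <= dot (a j) x.

(* Point sets are given as index sets Q; the points are the a_i, i in Q. *)
Definition affinely_independent (Q : {set 'I_n}) : Prop :=
  forall c : 'I_n -> R, \sum_(i in Q) c i = 0 ->
    \sum_(i in Q) c i *: a i = 0 -> forall i, i \in Q -> c i = 0.

Definition in_aff (Q : {set 'I_n}) (z : vec) : Prop :=
  exists c : 'I_n -> R, \sum_(i in Q) c i = 1 /\ z = \sum_(i in Q) c i *: a i.

Definition in_conv (Q : {set 'I_n}) (z : vec) : Prop :=
  exists c : 'I_n -> R, (forall i, i \in Q -> 0 <= c i) /\
    \sum_(i in Q) c i = 1 /\ z = \sum_(i in Q) c i *: a i.

Definition positively_spanning (Q : {set 'I_n}) : Prop :=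
  affinely_independent Q /\ in_conv Q 0.

Definition touching_center (Q : {set 'I_n}) (C : vec) : Prop :=
  in_aff Q C /\ exists rho : R, forall i, i \in Q -> vnorm (a i - C) = rho.

(* relative interior / relative boundary of conv Q (aff (conv Q) = aff Q;
   conv Q is closed, so its relative boundary is conv Q minus its relative
   interior) *)
Definition in_rel_interior_conv (Q : {set 'I_n}) (z : vec) : Prop :=
  in_conv Q z /\ exists eps : R, 0 < eps /\
    forall w, in_aff Q w -> vnorm (w - z) < eps -> in_conv Q w.

Definition in_rel_boundary_conv (Q : {set 'I_n}) (z : vec) : Prop :=
  in_conv Q z /\ ~ in_rel_interior_conv Q z.

(* y' is the point where the segment [y, C] meets the relative boundary of
   conv Q (the meeting point closest to C, i.e. where the segment leaves
   conv Q). *)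
Definition segment_exit (Q : {set 'I_n}) (y C y' : vec) : Prop :=
  exists t : R, 0 <= t <= 1 /\ y' = y + t *: (C - y) /\
    in_rel_boundary_conv Q y' /\
    forall s : R, t < s <= 1 -> ~ in_rel_boundary_conv Q (y + s *: (C - y)).

(* facets of the simplex conv P (P affinely independent) are conv F with
   F = P minus one vertex *)
Definition simplex_facet (P F : {set 'I_n}) : Prop :=
  exists2 v, v \in P & F = P :\ v.

Inductive alg_state : Type :=
  | AtStep2 of vec & {set 'I_n}          (* x^k, Q_k *)
  | AtStep4 of {set 'I_n} & 'I_n & vec   (* Q_k, m, y *)
  | Stop2 of vec                         (* stopped in step 2 with x^k *)
  | Stop3 of {set 'I_n}.                 (* stopped in step 3 with Q_k u {a_m} *)

Definition normalize (x : vec) : vec := (vnorm x)^-1 *: x.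

(* One transition of Algorithm 2.6 (all admissible choices allowed) *)
Inductive alg_step : alg_state -> alg_state -> Prop :=
  | step2_stop x Q :
      feasible (normalize x) -> alg_step (AtStep2 x Q) (Stop2 x)
  | step3_stop x Q m :
      ~ feasible (normalize x) -> most_violated (normalize x) m ->
      positively_spanning (m |: Q) ->
      alg_step (AtStep2 x Q) (Stop3 (m |: Q))
  | step3_continue x Q m :
      ~ feasible (normalize x) -> most_violated (normalize x) m ->
      ~ positively_spanning (m |: Q) ->
      alg_step (AtStep2 x Q) (AtStep4 Q m x)
  | step5 Q m y C :
      touching_center (m |: Q) C -> in_conv (m |: Q) C ->
      alg_step (AtStep4 Q m y) (AtStep2 C (m |: Q))
  | step6 Q m y C y' F j :
      touching_center (m |: Q) C -> ~ in_conv (m |: Q) C ->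
      segment_exit (m |: Q) y C y' ->
      simplex_facet (m |: Q) F -> in_conv F y' ->
      j \in Q -> j \notin F ->
      alg_step (AtStep4 Q m y) (AtStep4 (Q :\ j) m y').

End Defs.

Arguments AtStep2 {R d n}.
Arguments AtStep4 {R d n}.
Arguments Stop2 {R d n}.
Arguments Stop3 {R d n}.

From HB Require Import structures.
From mathcomp Require Import all_boot all_order all_algebra.
From mathcomp Require Import ring lra.
From Stdlib Require Import Relations ClassicalEpsilon.
Set Implicit Arguments. Unset Strict Implicit. Unset Printing Implicit Defensive.
Import Order.TTheory GRing.Theory Num.Theory.
Local Open Scope ring_scope.

(* Since every a_i is a unit vector, the touching sphere of Q is centred at the
   point of least norm of aff Q. Each iterate x^k is therefore the min-norm point
   of aff Q_k; it lies in conv Q_k and is nonzero, and Q_k stays affinely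
   independent. Once a violated a_m (a_m^T x^k < 0) is added, the center C of
   aff (Q_k u {a_m}) is shorter than x^k and has a positive coefficient on a_m;
   each round of step 6 moves y towards C, keeping |y| <= |x^k|, and drops a
   vertex other than a_m. So the loop through steps 4-6 ends after at most
   |Q_k| rounds and the norms |x^k| strictly decrease; since each of the
   finitely many sets Q has a single min-norm point, step 2 is visited finitely
   often. The same invariants show that every step of the algorithm can be
   carried out. *)

Section DotProduct.
Variables (R : rcfType) (d : nat).
Local Notation vec := 'rV[R]_d.+1.
Implicit Types (u v w : vec) (k : R).

Lemma dotC u v : dot u v = dot v u.
Proof. by apply: eq_bigr => i _; rewrite mulrC. Qed.

Lemma dotDl u v w : dot (u + v) w = dot u w + dot v w.
Proof. by rewrite /dot -big_split; apply: eq_bigr => i _; rewrite mxE mulrDl. Qed.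

Lemma dotZl k u w : dot (k *: u) w = k * dot u w.
Proof. by rewrite /dot mulr_sumr; apply: eq_bigr => i _; rewrite mxE mulrA. Qed.

Lemma dotNl u w : dot (- u) w = - dot u w.
Proof. by rewrite -scaleN1r dotZl mulN1r. Qed.

Lemma dotBl u v w : dot (u - v) w = dot u w - dot v w.
Proof. by rewrite dotDl dotNl. Qed.

Lemma dotDr u v w : dot w (u + v) = dot w u + dot w v.
Proof. by rewrite dotC dotDl !(dotC w). Qed.

Lemma dotZr k u w : dot w (k *: u) = k * dot w u.
Proof. by rewrite dotC dotZl dotC. Qed.

Lemma dotNr u w : dot w (- u) = - dot w u.
Proof. by rewrite dotC dotNl dotC. Qed.

Lemma dotBr u v w : dot w (u - v) = dot w u - dot w v.
Proof. by rewrite dotDr dotNr. Qed.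

Lemma dot0l w : dot 0 w = 0.
Proof. by rewrite -(scale0r 0) dotZl mul0r. Qed.

Lemma dot_suml (I : finType) (P : pred I) (F : I -> vec) w :
  dot (\sum_(i | P i) F i) w = \sum_(i | P i) dot (F i) w.
Proof.
rewrite /dot exchange_big /=; apply: eq_bigr => k _.
by rewrite summxE mulr_suml.
Qed.

Lemma dotBB u v : dot (u - v) (u - v) = dot u u - 2 * dot u v + dot v v.
Proof. by rewrite !dotBl !dotBr (dotC v u); ring. Qed.

Lemma dot_self_ge0 u : 0 <= dot u u.
Proof. by apply: sumr_ge0 => i _; rewrite -expr2 sqr_ge0. Qed.

Lemma dot_self_eq0 u : dot u u = 0 -> u = 0.
Proof.
rewrite [dot u u](eq_bigr (fun i => u 0 i ^+ 2)) => [/psumr_eq0P u0|i _]; last first.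
  by rewrite expr2.
apply/rowP => k; rewrite mxE; apply/eqP; rewrite -sqrf_eq0.
by apply/eqP; apply: u0 => // i _; apply: sqr_ge0.
Qed.

Lemma sqr_vnorm u : vnorm u ^+ 2 = dot u u.
Proof. by rewrite sqr_sqrtr // dot_self_ge0. Qed.

Lemma vnorm_gt0 u : 0 < dot u u -> 0 < vnorm u.
Proof. by rewrite sqrtr_gt0. Qed.

Lemma vnormZ k u : 0 <= k -> vnorm (k *: u) = k * vnorm u.
Proof.
move=> k0; rewrite /vnorm dotZl dotZr mulrA sqrtrM ?mulr_ge0 //.
by rewrite -expr2 sqrtr_sqr ger0_norm.
Qed.

Lemma dot_normalize w u : dot w (normalize u) = (vnorm u)^-1 * dot w u.
Proof. exact: dotZr. Qed.

Lemma vnorm_normalize u : 0 < dot u u -> vnorm (normalize u) = 1.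
Proof.
move=> /vnorm_gt0 u0; rewrite /normalize vnormZ ?invr_ge0 ?ltW //.
by rewrite mulVf // lt0r_neq0.
Qed.

End DotProduct.

Lemma exit_time (R : realFieldType) (I : finType) (P : {pred I}) (c e : I -> R) :
  (forall i, P i -> 0 <= c i) -> (exists2 i, P i & e i < 0) ->
  exists t j, [/\ 0 <= t <= 1, P j, e j < 0, c j + t * (e j - c j) = 0 &
    forall i, P i -> 0 <= c i + t * (e i - c i)].
Proof.
move=> c0 [i0 Pi0 ei0].
have Pei0 : P i0 && (e i0 < 0) by rewrite Pi0 ei0.
case: (@arg_minP _ _ _ _ (fun i => P i && (e i < 0)) (fun i => c i / (c i - e i)) Pei0).
move=> j /andP[Pj ej] tmin.
set t := c j / (c j - e j) in tmin *.
have cej : 0 < c j - e j by have := c0 j Pj; lra.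
have t0 : 0 <= t by rewrite divr_ge0 ?c0 ?ltW.
have t1 : t <= 1 by rewrite ler_pdivrMr // mul1r; have := c0 j Pj; lra.
exists t, j; split; rewrite ?t0 ?t1 //; first by rewrite /t; field; rewrite lt0r_neq0.
move=> i Pi; have ci := c0 i Pi; have [ei|ei] := ltP (e i) 0.
  have := tmin i; rewrite Pi ei => /(_ isT).
  by rewrite ler_pdivlMr; lra.
nra.
Qed.

Section AffineHull.
Variables (R : rcfType) (d n : nat) (a : 'I_n -> 'rV[R]_d.+1).
Local Notation vec := 'rV[R]_d.+1.
Implicit Types (P Q : {set 'I_n}) (c e : 'I_n -> R) (w y z : vec).

Lemma sum_extend0 (V : zmodType) P' P (F : 'I_n -> V) : P' \subset P ->
  \sum_(i in P) (if i \in P' then F i else 0) = \sum_(i in P') F i.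
Proof.
move=> sPP'; rewrite -big_mkcondr /=; apply: eq_bigl => i.
by apply/andb_idl => /(subsetP sPP').
Qed.

Lemma combination_extend0 P' P c : P' \subset P ->
  \sum_(i in P) (if i \in P' then c i else 0) *: a i = \sum_(i in P') c i *: a i.
Proof.
move=> sPP'; rewrite -(sum_extend0 (fun i => c i *: a i) sPP').
by apply: eq_bigr => i _; case: ifP; rewrite ?scale0r.
Qed.

Lemma in_conv_subset P' P z : P' \subset P -> in_conv a P' z -> in_conv a P z.
Proof.
move=> sPP' [c [c0 [c1 ->]]]; exists (fun i => if i \in P' then c i else 0).
split; first by move=> i _; case: ifP => // /c0.
by rewrite sum_extend0 // combination_extend0.
Qed.

Lemma in_aff_subset P' P z : P' \subset P -> in_aff a P' z -> in_aff a P z.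
Proof.
move=> sPP' [c [c1 ->]]; exists (fun i => if i \in P' then c i else 0).
by rewrite sum_extend0 // combination_extend0.
Qed.

Lemma in_conv_aff P z : in_conv a P z -> in_aff a P z.
Proof. by move=> [c [_ h]]; exists c. Qed.

Lemma affinely_independent_subset P' P : P' \subset P ->
  affinely_independent a P -> affinely_independent a P'.
Proof.
move=> sPP' indP c c0 ca i iP'.
have := indP (fun i => if i \in P' then c i else 0).
rewrite sum_extend0 // combination_extend0 // => /(_ c0 ca i (subsetP sPP' _ iP')).
by rewrite iP'.
Qed.

Lemma affine_coef_uniq P c e : affinely_independent a P ->
  \sum_(i in P) c i = \sum_(i in P) e i ->
  \sum_(i in P) c i *: a i = \sum_(i in P) e i *: a i ->
  forall i, i \in P -> c i = e i.
Proof.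
move=> indP ce cae i iP; apply/eqP; rewrite -subr_eq0; apply/eqP.
apply: (indP (fun i => c i - e i)) => //; first by rewrite sumrB ce subrr.
rewrite (eq_bigr (fun i => c i *: a i - e i *: a i)) => [|j _].
  by rewrite sumrB cae subrr.
by rewrite scalerBl.
Qed.

Lemma notin_conv_neg_coef P c z i : affinely_independent a P ->
  \sum_(i in P) c i = 1 -> z = \sum_(i in P) c i *: a i -> i \in P -> c i < 0 ->
  ~ in_conv a P z.
Proof.
move=> indP c1 cz iP ci [e [e0 [e1 ez]]].
have ce : c i = e i.
  by apply: (affine_coef_uniq indP) => //; rewrite ?c1 ?e1 // -cz -ez.
by move: ci; rewrite ce ltNge e0.
Qed.

Lemma affine_line_coef P c e y z s :
  \sum_(i in P) c i = 1 -> y = \sum_(i in P) c i *: a i ->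
  \sum_(i in P) e i = 1 -> z = \sum_(i in P) e i *: a i ->
  \sum_(i in P) (c i + s * (e i - c i)) = 1 /\
  \sum_(i in P) (c i + s * (e i - c i)) *: a i = y + s *: (z - y).
Proof.
move=> c1 -> e1 ->; split.
  by rewrite big_split /= -mulr_sumr sumrB c1 e1 subrr mulr0 addr0.
rewrite (eq_bigr (fun i => c i *: a i + s *: (e i *: a i - c i *: a i))).
  by rewrite big_split /= -scaler_sumr sumrB.
by move=> i _; rewrite scalerDl scalerBr !scalerA mulrBr scalerBl.
Qed.

Lemma dot_in_aff P z w k : in_aff a P z ->
  (forall i, i \in P -> dot (a i) w = k) -> dot z w = k.
Proof.
move=> [c [c1 ->]] Pk; rewrite dot_suml.
under eq_bigr => i iP do rewrite dotZl Pk //.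
by rewrite -mulr_suml c1 mul1r.
Qed.

Lemma affinely_independent_setU1 Q m x k :
  affinely_independent a Q -> (forall i, i \in Q -> dot (a i) x = k) ->
  dot (a m) x != k -> affinely_independent a (m |: Q).
Proof.
move=> indQ Qk mk; have mQ : m \notin Q by apply: contra mk => /Qk ->.
move=> c; rewrite !big_setU1 //= => c0 ca.
have cm0 : c m = 0.
  have := congr1 (fun v => dot v x) ca; rewrite /= dot0l dotDl dotZl dot_suml.
  under eq_bigr => i /Qk Qi do rewrite dotZl Qi.
  rewrite -mulr_suml (_ : \sum_(i in Q) c i = - c m); last first.
    by apply/eqP; rewrite -addr_eq0 addrC c0.
  move/eqP; rewrite mulNr -mulrBr mulf_eq0 subr_eq0 (negbTE mk) orbF.
  by move/eqP.
move: c0 ca; rewrite cm0 scale0r !add0r => c0 ca i /setU1P[-> //|].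
exact: indQ.
Qed.

Definition orth_proj P w z :=
  in_aff a P z /\ forall i, i \in P -> dot (a i - z) (w - z) = 0.

Lemma orth_proj_set1 v w : orth_proj [set v] w (a v).
Proof.
split; first by exists (fun _ => 1); rewrite !big_set1 scale1r.
by move=> i /set1P ->; rewrite subrr dot0l.
Qed.

Lemma in_aff_setD1_shift P v y z s : v \in P ->
  in_aff a (P :\ v) y -> in_aff a (P :\ v) z -> in_aff a P (y + s *: (a v - z)).
Proof.
move=> vP [cy [cy1 ->]] [cz [cz1 ->]].
exists (fun i => if i == v then s else cy i - s * cz i).
have notv i : i \in P :\ v -> (i == v) = false.
  by rewrite in_setD1 => /andP[/negbTE].
rewrite !(big_setD1 v vP) /= eqxx; split.
  rewrite (eq_bigr (fun i => cy i - s * cz i)) => [|i /notv -> //].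
  by rewrite sumrB -mulr_sumr cy1 cz1; ring.
rewrite [in RHS](eq_bigr (fun i => cy i *: a i - s *: (cz i *: a i))) => [|i /notv ->].
  by rewrite sumrB -scaler_sumr; apply/rowP => k; rewrite !mxE; ring.
by rewrite scalerBl scalerA.
Qed.

Lemma orth_proj_setD1 P v w zw zv : v \in P ->
  orth_proj (P :\ v) w zw -> orth_proj (P :\ v) (a v) zv ->
  exists z, orth_proj P w z.
Proof.
move=> vP [affw orthw] [affv orthv].
(* Gram-Schmidt: u is the part of a v orthogonal to aff (P :\ v). *)
set u := a v - zv.
have {}orthw i : i \in P :\ v -> dot (a i) (w - zw) = dot zw (w - zw).
  by move=> /orthw /eqP; rewrite dotBl subr_eq0 => /eqP.
have {}orthv i : i \in P :\ v -> dot (a i) u = dot zv u.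
  by move=> /orthv /eqP; rewrite dotBl subr_eq0 => /eqP.
have zwu : dot zw u = dot zv u by apply: dot_in_aff affw orthv.
have zvw : dot zv (w - zw) = dot zw (w - zw) by apply: dot_in_aff affv orthw.
have av : a v = zv + u by rewrite addrC subrK.
have [u0|u_neq0] := eqVneq (dot u u) 0.
  exists zw; split; first exact: in_aff_subset (subsetDl _ _) affw.
  move=> i iP; have [->|iv] := eqVneq i v.
    by rewrite av (dot_self_eq0 u0) addr0 dotBl zvw subrr.
  by rewrite dotBl orthw ?subrr // in_setD1 iv.
pose s := dot u (w - zw) / dot u u.
have uw : dot u (w - zw) = s * dot u u by rewrite mulfVK.
exists (zw + s *: u); split; first exact: in_aff_setD1_shift.
clearbody u; move=> i iP.
have -> : a i - (zw + s *: u) = (a i - zw) - s *: u by rewrite opprD addrA.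
have -> : w - (zw + s *: u) = (w - zw) - s *: u by rewrite opprD addrA.
move: (w - zw) orthw zvw uw => q orthw zvw uw.
rewrite !dotBl !dotBr !dotZl !dotZr uw zwu.
have [->|iv] := eqVneq i v; first by rewrite av !dotDl zvw uw; ring.
have iPv : i \in P :\ v by rewrite in_setD1 iv.
by rewrite orthw // orthv //; ring.
Qed.

Lemma orth_proj_exists P w : P != set0 -> exists z, orth_proj P w z.
Proof.
have [k ltPk] := ubnP #|P|; elim: k => // k IH in P w ltPk *.
case/set0Pn=> v vP; have [P1|P_neq1] := eqVneq (P :\ v) set0.
  by exists (a v); rewrite -(setD1K vP) P1 setU0; apply: orth_proj_set1.
have ltP : (#|P :\ v| < k)%N.
  by move: ltPk; rewrite (cardsD1 v P) vP add1n ltnS.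
have [zw hw] := IH _ w ltP P_neq1.
have [zv hv] := IH _ (a v) ltP P_neq1.
exact: orth_proj_setD1 vP hw hv.
Qed.

Definition min_norm_point P z :=
  in_aff a P z /\ forall i, i \in P -> dot (a i) z = dot z z.

Lemma min_norm_point_exists P : P != set0 -> exists z, min_norm_point P z.
Proof.
move=> /(orth_proj_exists 0) [z [affz orthz]]; exists z; split => // i /orthz.
by rewrite sub0r dotNr dotBl => /eqP; rewrite oppr_eq0 subr_eq0 => /eqP.
Qed.

Lemma min_norm_point_dot P y z : min_norm_point P z -> in_aff a P y ->
  dot y z = dot z z.
Proof. by move=> [_ Pz] /dot_in_aff; apply. Qed.

Lemma min_norm_point_uniq P z z' : min_norm_point P z -> min_norm_point P z' ->
  z = z'.
Proof.
move=> hz hz'; have e1 := min_norm_point_dot hz (proj1 hz').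
have e2 := min_norm_point_dot hz' (proj1 hz).
apply/eqP; rewrite -subr_eq0; apply/eqP; apply: dot_self_eq0.
by rewrite dotBB e2 -e1 dotC e2; ring.
Qed.

End AffineHull.

Section SegmentExit.
Variables (R : rcfType) (d n : nat) (a : 'I_n -> 'rV[R]_d.+1).
Implicit Types (P : {set 'I_n}) (e : 'I_n -> R) (v y z C : 'rV[R]_d.+1).

Lemma notin_rel_interior P z v :
  (forall s, 0 < s -> in_aff a P (z + s *: v) /\ ~ in_conv a P (z + s *: v)) ->
  ~ in_rel_interior_conv a P z.
Proof.
move=> beyond [_ [eps [eps0 near]]].
pose s := eps / (vnorm v + 1).
have v0 : 0 <= vnorm v := sqrtr_ge0 _.
have s0 : 0 < s by rewrite divr_gt0 //; lra.
have [affs nconvs] := beyond s s0; apply/nconvs/near => //.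
rewrite addrC addKr vnormZ ?ltW // /s mulrAC ltr_pdivrMr; nra.
Qed.

Lemma segment_exit_facet P y C e : affinely_independent a P -> in_conv a P y ->
  \sum_(i in P) e i = 1 -> C = \sum_(i in P) e i *: a i -> ~ in_conv a P C ->
  exists j y', [/\ j \in P, e j < 0, segment_exit a P y C y' & in_conv a (P :\ j) y'].
Proof.
move=> indP [c [c0 [c1 cy]]] e1 eC nconvC.
have [i0 Pi0 ei0] : exists2 i, i \in P & e i < 0.
  apply: NNPP => noneg; apply: nconvC; exists e; split => // i iP.
  by rewrite leNgt; apply/negP => ei; apply: noneg; exists i.
have [t [j [/andP[t0 t1] jP ej fj0 f0]]] :=
  exit_time (P := fun i => i \in P) c0 (ex_intro2 _ _ i0 Pi0 ei0).
have line s := affine_line_coef s c1 cy e1 eC.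
have beyond s : t < s -> ~ in_conv a P (y + s *: (C - y)).
  move=> ts; have [g1 gy] := line s.
  apply: (notin_conv_neg_coef indP g1 (esym gy) jP).
  by have := c0 j jP; nra.
have [f1 fy] := line t.
set y' := y + t *: (C - y) in fy *.
exists j, y'; split => //.
  exists t; split; first by rewrite t0 t1.
  split=> //; split; last by move=> s /andP[ts _] [/beyond].
  split; first by exists (fun i => c i + t * (e i - c i)).
  apply: (@notin_rel_interior _ _ (C - y)) => s s0.
  have -> : y' + s *: (C - y) = y + (t + s) *: (C - y) by rewrite scalerDl addrA.
  have [g1 gy] := line (t + s); split; last by apply: beyond; lra.
  by exists (fun i => c i + (t + s) * (e i - c i)).
exists (fun i => c i + t * (e i - c i)); split.
  by move=> i /setD1P[_ /f0].
by rewrite -fy -f1 !(big_setD1 j jP) /= fj0 scale0r !add0r.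
Qed.

End SegmentExit.

Section Algorithm.
Variables (R : rcfType) (d n : nat) (a : 'I_n -> 'rV[R]_d.+1).
Hypothesis unit_a : forall i, vnorm (a i) = 1.
Local Notation vec := 'rV[R]_d.+1.
Local Notation min_norm_point := (min_norm_point a).
Implicit Types (P Q : {set 'I_n}) (x y C : vec).

Lemma dot_a_a i : dot (a i) (a i) = 1.
Proof. by rewrite -sqr_vnorm unit_a expr1n. Qed.

Lemma touching_centerE P C : touching_center a P C <-> min_norm_point P C.
Proof.
split=> [[affC [rho Prho]]|[affC PC]]; last first.
  split=> //; exists (Num.sqrt (1 - dot C C)) => i iP.
  by rewrite /vnorm dotBB dot_a_a PC //; congr Num.sqrt; ring.
have Pk i : i \in P -> dot (a i) C = (1 + dot C C - rho ^+ 2) / 2.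
  by move=> /Prho <-; rewrite sqr_vnorm dotBB dot_a_a; field.
split=> // i /Pk ->; exact: esym (dot_in_aff affC Pk).
Qed.

Definition step2_inv x Q :=
  [/\ affinely_independent a Q, in_conv a Q x, min_norm_point Q x & 0 < dot x x].

(* [x] is the iterate x^k of the last visit of step 2, [y] the current point
   of steps 4-6. *)
Record step4_inv x Q m y : Prop := {
  inv4_indep : affinely_independent a (m |: Q);
  inv4_dotQ : forall i, i \in Q -> dot (a i) x = dot x x;
  inv4_pos : 0 < dot x x;
  inv4_dotm : dot (a m) x < 0;
  inv4_0notin : ~ in_conv a (m |: Q) 0;
  inv4_conv : in_conv a (m |: Q) y;
  inv4_norm : y = x \/ dot y y < dot x x }.

Lemma inv4_notin x Q m y : step4_inv x Q m y -> m \notin Q.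
Proof.
case=> _ dotQ pos dotm _ _ _; apply/negP => /dotQ mx.
by move: dotm; rewrite mx ltNge ltW.
Qed.

Lemma center_norm_lt x Q m y C : step4_inv x Q m y ->
  min_norm_point (m |: Q) C -> dot C C < dot x x.
Proof.
move=> inv hC; have yC := min_norm_point_dot hC (in_conv_aff (inv4_conv inv)).
have := dot_self_ge0 (y - C); rewrite dotBB yC.
case: (inv4_norm inv) => [yx|]; last by lra.
subst y; rewrite lt_neqAle => xC; apply/andP; split; last by lra.
apply/eqP => CC; have xeqC : x = C.
  by apply/eqP; rewrite -subr_eq0; apply/eqP/dot_self_eq0; rewrite dotBB yC CC; ring.
have := proj2 hC m (setU11 _ _); rewrite -xeqC.
by have := inv4_dotm inv; have := inv4_pos inv; lra.
Qed.

Lemma center_coef_gt0 x Q m y C e : step4_inv x Q m y ->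
  min_norm_point (m |: Q) C -> \sum_(i in m |: Q) e i = 1 ->
  C = \sum_(i in m |: Q) e i *: a i -> 0 < e m.
Proof.
move=> inv hC e1 eC; have lt := center_norm_lt inv hC.
have mQ := inv4_notin inv.
have Cx : dot C x = e m * dot (a m) x + (1 - e m) * dot x x.
  rewrite eC dot_suml big_setU1 //= dotZl.
  under eq_bigr => i iQ do rewrite dotZl (inv4_dotQ inv iQ).
  by rewrite -mulr_suml; move: e1; rewrite big_setU1 //= => <-; ring.
have := dot_self_ge0 (C - x); rewrite dotBB Cx.
by have := inv4_dotm inv; have := inv4_pos inv; nra.
Qed.

Lemma step2_inv_start j0 : step2_inv (a j0) [set j0].
Proof.
split; rewrite ?dot_a_a ?ltr01 //.
- by move=> c; rewrite !big_set1 => c0 _ i /set1P ->.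
- by exists (fun _ => 1); rewrite !big_set1 scale1r; split=> // i _; apply: ler01.
by split=> [|i /set1P ->]; first exists (fun _ => 1); rewrite ?big_set1 ?scale1r.
Qed.

Lemma most_violated_lt0 x m : 0 < dot x x -> ~ feasible a (normalize x) ->
  most_violated a (normalize x) m -> dot (a m) x < 0.
Proof.
move=> x0 infeas mviol.
have [i ai] : exists i, dot (a i) (normalize x) < 0.
  apply: NNPP => noneg; apply: infeas => i; rewrite leNgt; apply/negP => ai.
  by apply: noneg; exists i.
have := le_lt_trans (mviol i) ai; rewrite dot_normalize pmulr_rlt0 //.
by rewrite invr_gt0 vnorm_gt0.
Qed.

Lemma step4_inv_init x Q m : step2_inv x Q -> dot (a m) x < 0 ->
  ~ positively_spanning a (m |: Q) -> step4_inv x Q m x.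
Proof.
move=> [indQ convx [_ dotQ] x0] mx npos.
have indmQ : affinely_independent a (m |: Q).
  by apply: affinely_independent_setU1 indQ dotQ _; rewrite lt_eqF // (lt_trans mx).
split=> //; last by left.
- by move=> conv0; apply: npos.
- by apply: in_conv_subset convx; apply: subsetU1.
Qed.

Lemma step2_inv_center x Q m y C : step4_inv x Q m y ->
  min_norm_point (m |: Q) C -> in_conv a (m |: Q) C -> step2_inv C (m |: Q).
Proof.
move=> inv hC convC; split=> //; first exact: inv4_indep inv.
rewrite lt0r dot_self_ge0 andbT; apply: contra_notN (inv4_0notin inv).
by move/eqP/dot_self_eq0 => C0; rewrite -C0.
Qed.

Lemma dot_toward_center y C t : dot y C = dot C C ->
  dot (y + t *: (C - y)) (y + t *: (C - y)) =
  dot y y - (2 * t - t ^+ 2) * (dot y y - dot C C).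
Proof.
by move=> yC; rewrite !dotDl !dotDr !dotZl !dotZr !dotBl !dotBr (dotC C y) yC; ring.
Qed.

Lemma simplex_facetE Q m j F : m \notin Q -> j \in Q ->
  simplex_facet (m |: Q) F -> j \notin F -> F = m |: (Q :\ j).
Proof.
move=> mQ jQ [v _ ->]; rewrite in_setD1 setU1r // andbT negbK => /eqP <-.
apply/setP => i; rewrite !inE; have [->|] := eqVneq i m => //=.
by rewrite andbT; apply: contraNneq _ mQ => ->.
Qed.

Lemma step4_inv_exit x Q m y C y' F j : step4_inv x Q m y ->
  min_norm_point (m |: Q) C -> segment_exit a (m |: Q) y C y' ->
  simplex_facet (m |: Q) F -> in_conv a F y' -> j \in Q -> j \notin F ->
  step4_inv x (Q :\ j) m y'.
Proof.
move=> inv hC [t [/andP[t0 t1] [-> _]]] facetF convF jQ jF.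
have subQ : m |: (Q :\ j) \subset m |: Q by apply/setUS/subD1set.
rewrite (simplex_facetE (inv4_notin inv) jQ facetF jF) in convF.
split; first exact: affinely_independent_subset subQ (inv4_indep inv).
- by move=> i /setD1P[_ /(inv4_dotQ inv)].
- exact: inv4_pos inv.
- exact: inv4_dotm inv.
- by move=> conv0; apply/(inv4_0notin inv)/(in_conv_subset subQ).
- exact: convF.
have [->|t_neq0] := eqVneq t 0; first by rewrite scale0r addr0; exact: inv4_norm inv.
right; have lt := center_norm_lt inv hC.
have yx : dot y y <= dot x x by case: (inv4_norm inv) => [->|/ltW].
rewrite dot_toward_center; last first.
  exact: min_norm_point_dot hC (in_conv_aff (inv4_conv inv)).
(* |y'|^2 = (1 - l) |y|^2 + l |C|^2 with l = 2t - t^2 in (0, 1] *)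
have tpos : 0 < t by rewrite lt_neqAle eq_sym t_neq0.
have lam0 : 0 < 2 * t - t ^+ 2 by nra.
have lam1 : 2 * t - t ^+ 2 <= 1 by nra.
nra.
Qed.

Lemma step2_progress x Q : exists s, alg_step a (AtStep2 x Q) s.
Proof.
have [feas|infeas] := classic (feasible a (normalize x)).
  by exists (Stop2 x); apply: step2_stop.
have [i0 _] : exists i : 'I_n, true.
  by apply: NNPP => none; apply: infeas => i; case: none; exists i.
case: (@arg_minP _ _ _ i0 xpredT (fun j => dot (a j) (normalize x)) isT).
move=> m _ mviol.
have {}mviol : most_violated a (normalize x) m by move=> j; apply: mviol.
have [pos|npos] := classic (positively_spanning a (m |: Q)).
  by eexists; apply: step3_stop.
by eexists; apply: step3_continue.
Qed.

Lemma step4_progress x Q m y : step4_inv x Q m y ->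
  exists s, alg_step a (AtStep4 Q m y) s.
Proof.
move=> inv; have [C hC] : exists C, min_norm_point (m |: Q) C.
  by apply: min_norm_point_exists; apply/set0Pn; exists m; rewrite setU11.
have touchC := (touching_centerE _ _).2 hC.
have [convC|nconvC] := classic (in_conv a (m |: Q) C).
  by eexists; apply: step5 touchC convC.
have [[e [e1 eC]] _] := hC.
have [j [y' [jmQ ej exit convy']]] :=
  segment_exit_facet (inv4_indep inv) (inv4_conv inv) e1 eC nconvC.
have jQ : j \in Q.
  case/setU1P: jmQ => // jm; have := center_coef_gt0 inv hC e1 eC.
  by rewrite -jm; lra.
eexists; apply: (step6 touchC nconvC exit _ convy' jQ); first by exists j.
by rewrite setD11.
Qed.

Definition alg_inv (s : alg_state R d n) : Prop :=
  match s with
  | AtStep2 x Q => step2_inv x Q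
  | AtStep4 Q m y => exists x, step4_inv x Q m y
  | Stop2 x => vnorm (normalize x) = 1 /\ forall i, 0 <= dot (a i) x
  | Stop3 Q => positively_spanning a Q
  end.

Lemma alg_inv_step s s' : alg_inv s -> alg_step a s s' -> alg_inv s'.
Proof.
move=> inv_s st; case: st inv_s => /=.
- move=> x Q feas [_ _ _ x0]; split; first exact: vnorm_normalize.
  move=> i; have := feas i; rewrite dot_normalize pmulr_rge0 //.
  by rewrite invr_gt0 vnorm_gt0.
- by [].
- move=> x Q m infeas mviol npos inv; have [_ _ _ x0] := inv.
  by exists x; apply: step4_inv_init inv (most_violated_lt0 x0 infeas mviol) npos.
- move=> Q m y C /touching_centerE hC convC [x inv].
  exact: step2_inv_center inv hC convC.
- move=> Q m y C y' F j /touching_centerE hC _ exit facetF convF jQ jF [x inv].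
  by exists x; apply: step4_inv_exit inv hC exit facetF convF jQ jF.
Qed.

Lemma alg_inv_reachable s s' : clos_refl_trans _ (alg_step a) s s' ->
  alg_inv s -> alg_inv s'.
Proof.
elim=> [u v /[swap] /alg_inv_step|//|u v w _ IHuv _ IHvw /IHuv/IHvw] //; apply.
Qed.

Definition hull_center P : vec := epsilon (inhabits 0) (min_norm_point P).

Lemma hull_centerE P z : min_norm_point P z -> hull_center P = z.
Proof.
by move=> hz; apply: min_norm_point_uniq (epsilon_spec _ _ (ex_intro _ z hz)) hz.
Qed.

Definition lower_hulls x :=
  [set P : {set 'I_n} | dot (hull_center P) (hull_center P) < dot x x].

Lemma lower_hulls_proper x x' Q' : min_norm_point Q' x' -> dot x' x' < dot x x ->
  lower_hulls x' \proper lower_hulls x.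
Proof.
move=> hx' lt; apply/properP; split.
  by apply/subsetP => P; rewrite !inE => /lt_trans; apply.
by exists Q'; rewrite !inE (hull_centerE hx') ?lt ?ltxx.
Qed.

Local Notation terminates := (Acc (fun t s => alg_step a s t)).

Lemma terminates_step4 x :
    (forall x' Q', step2_inv x' Q' -> dot x' x' < dot x x ->
       terminates (AtStep2 x' Q')) ->
  forall Q m y, step4_inv x Q m y -> terminates (AtStep4 Q m y).
Proof.
move=> IH2 Q; have [k ltQk] := ubnP #|Q|.
elim: k => [|k IH] in Q ltQk *; first by rewrite ltn0 in ltQk.
move=> m y inv; constructor => s st.
inversion st as [| | | ? ? ? C touchC convC
                 | ? ? ? C y' F j touchC _ exit facetF convF jQ jF]; subst.
  have hC := (touching_centerE _ _).1 touchC.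
  exact: IH2 (step2_inv_center inv hC convC) (center_norm_lt inv hC).
have hC := (touching_centerE _ _).1 touchC.
apply: IH (step4_inv_exit inv hC exit facetF convF jQ jF).
by rewrite (cardsD1 j Q) jQ add1n ltnS in ltQk.
Qed.

Lemma terminates_step2 x Q : step2_inv x Q -> terminates (AtStep2 x Q).
Proof.
have [k ltk] := ubnP #|lower_hulls x|.
elim: k => [|k IH] in x Q ltk *; first by rewrite ltn0 in ltk.
move=> inv; constructor => s st.
inversion st as [| | ? ? m infeas mviol npos | |]; subst.
- by constructor => ? st'; inversion st'.
- by constructor => ? st'; inversion st'.
have [_ _ _ x0] := inv.
have mx := most_violated_lt0 x0 infeas mviol.
apply: (terminates_step4 _ (step4_inv_init inv mx npos)).
move=> x' Q' inv' lt; have [_ _ hx' _] := inv'.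
apply: IH inv'; rewrite ltnS in ltk.
exact: leq_trans (proper_card (lower_hulls_proper hx' lt)) ltk.
Qed.

End Algorithm.

Theorem lemma2p8 (R : rcfType) (d n : nat) (a : 'I_n -> 'rV[R]_d.+1)
  (ha : forall i, vnorm (a i) = 1) (j0 : 'I_n) :
  (* every run from the start state is finite *)
  Acc (fun t s => alg_step a s t) (AtStep2 (a j0) [set j0]) /\
  (* every reachable state can continue, or is a stop of the required kind *)
  (forall s, clos_refl_trans _ (alg_step a) (AtStep2 (a j0) [set j0]) s ->
     (exists t, alg_step a s t) \/
     (exists x, s = Stop2 x /\ vnorm (normalize x) = 1 /\
                (forall i, 0 <= dot (a i) x)) \/
     (exists Q, s = Stop3 Q /\ positively_spanning a Q)).
Proof.
have start := step2_inv_start ha j0.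
split; first exact (terminates_step2 ha start).
move=> s /(alg_inv_reachable ha) /(_ start).
case: s => /= [x Q _ | Q m y [x inv] | x stop2 | Q pos].
- by left; apply: step2_progress.
- by left; apply: step4_progress inv.
- by right; left; exists x.
- by right; right; exists Q.
Qed.
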